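(* There is no set $\Lambda$ of $\mathcal L$-formulas such that, for every playable $Ł_n$-frame $\mathfrak F$, $\mathfrak F$ is truly playable if and only if every formula of $\Lambda$ is valid in $\mathfrak F$.
   Context: $Ł_n=\{0,\frac1n,\dots,1\}$ with $\neg x=1-x$, $x\oplus y=\min(x+y,1)$, $x\odot y=\max(x+y-1,0)$, $x\to y=\min(1,1-x+y)$, $\wedge=\min$, applied pointwise. $N$ finite set of players, $|N|\ge2$. An $Ł_n$-valued effectivity function on a set $S$ is a map $E:\mathcal P N\times Ł_n^S\to Ł_n$. It is: outcome monotonic if $f\ge g$ implies $E(C,f)\ge E(C,g)$; $N$-maximal if $\neg E(\varnothing,\neg f)\le E(N,f)$; superadditive if $E(C_1,f)\wedge E(C_2,g)\le E(C_1\cup C_2,f\wedge g)$ whenever $C_1\cap C_2=\varnothing$; homogeneous if $E(C,f\oplus f)=E(C,f)\oplus E(C,f)$ and $E(C,f\odot f)=E(C,f)\odot E(C,f)$; has liveness if $E(C,1)=1$ for all $C$; has safety if $E(C,0)=0$ for all $C$; principal if there is $g$ with $\{f\mid E(\varnothing,f)=1\}=\{f\mid f\ge g\odot\cdots\odot g\ (n\text{ factors})\}$. Playable: first six properties; truly playable: playable and principal. Formulas of $\mathcal L$: $\phi::=1\mid p\mid\phi\to\phi\mid\neg\phi\mid[C]\phi$ ($p$ in a countably infinite set $\mathsf{Prop}$, $C\subseteq N$). An $Ł_n$-frame is $(S,E)$ with $S\ne\varnothing$ and $E(u)$ an $Ł_n$-valued effectivity function on $S$ for each $u\in S$; it is (truly)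 playable if every $E(u)$ is. A model on it adds $\mathrm{Val}:S\times\mathsf{Prop}\to Ł_n$, extended by $\mathrm{Val}(u,1)=1$, $\mathrm{Val}(u,\neg\phi)=\neg\mathrm{Val}(u,\phi)$, $\mathrm{Val}(u,\phi\to\psi)=\mathrm{Val}(u,\phi)\to\mathrm{Val}(u,\psi)$, $\mathrm{Val}(u,[C]\phi)=E(u)(C,\mathrm{Val}(-,\phi))$. A formula is true in a model if its value is $1$ at every state, and valid in a frame if true in every model based on the frame. *)

From mathcomp Require Import all_boot all_order.
Set Implicit Arguments. Unset Strict Implicit. Unset Printing Implicit Defensive.

(* The Lukasiewicz chain L_n = {0, 1/n, ..., 1} is represented by 'I_n.+1:
   the ordinal k stands for k/n. Operations are transported accordingly. *)
Definition Luk (n : nat) := 'I_n.+1.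

Section Luk.
Variable n : nat.
Definition ltop : Luk n := ord_max.
Definition lbot : Luk n := ord0.
Definition lneg (x : Luk n) : Luk n := inord (n - x).
Definition loplus (x y : Luk n) : Luk n := inord (minn (x + y) n).
Definition lodot (x y : Luk n) : Luk n := inord ((x + y) - n).
Definition limp (x y : Luk n) : Luk n := inord (minn n ((n - x) + y)).
Definition lmin (x y : Luk n) : Luk n := inord (minn x y).
Definition lle (x y : Luk n) : Prop := (nat_of_ord x <= nat_of_ord y)%N.

Fixpoint lpow (k : nat) (x : Luk n) : Luk n :=
  match k with
  | 0 => ltop
  | 1 => x
  | k'.+1 => lodot x (lpow k' x)
  end.
End Luk.

Definition effFun (N : finType) (n : nat) (S : Type) :=
  {set N} -> (S -> Luk n) -> Luk n.

Section Props.
Variables (N : finType) (n : nat) (S : Type) (E : effFun N n S).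

Definition outcome_monotonic : Prop :=
  forall C (f g : S -> Luk n), (forall s, lle (g s) (f s)) -> lle (E C g) (E C f).

Definition N_maximal : Prop :=
  forall f : S -> Luk n, lle (lneg (E set0 (fun s => lneg (f s)))) (E setT f).

Definition superadditive : Prop :=
  forall (C1 C2 : {set N}) (f g : S -> Luk n), C1 :&: C2 = set0 ->
    lle (lmin (E C1 f) (E C2 g)) (E (C1 :|: C2) (fun s => lmin (f s) (g s))).

Definition homogeneous : Prop :=
  forall C (f : S -> Luk n),
    E C (fun s => loplus (f s) (f s)) = loplus (E C f) (E C f) /\
    E C (fun s => lodot (f s) (f s)) = lodot (E C f) (E C f).

Definition liveness : Prop := forall C, E C (fun _ => ltop n) = ltop n.
Definition safety : Prop := forall C, E C (fun _ => lbot n) = lbot n.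

Definition principal : Prop :=
  exists g : S -> Luk n, forall f : S -> Luk n,
    E set0 f = ltop n <-> (forall s, lle (lpow n (g s)) (f s)).

Definition playable : Prop :=
  outcome_monotonic /\ N_maximal /\ superadditive /\ homogeneous /\
  liveness /\ safety.

Definition truly_playable : Prop := playable /\ principal.
End Props.

Definition playable_frame (N : finType) (n : nat) (S : Type)
  (E : S -> effFun N n S) : Prop := forall u, playable (E u).
Definition truly_playable_frame (N : finType) (n : nat) (S : Type)
  (E : S -> effFun N n S) : Prop := forall u, truly_playable (E u).

(* Formulas of L; Prop = nat (countably infinite) *)
Inductive form (N : finType) : Type :=
  | FTop : form N
  | FVar : nat -> form N
  | FImp : form N -> form N -> form N
  | FNeg : form N -> form N
  | FBox : {set N} -> form N -> form N.

Fixpoint eval (N : finType) (n : nat) (S : Type) (E : S -> effFun N n S)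
  (V : S -> nat -> Luk n) (phi : form N) (u : S) : Luk n :=
  match phi with
  | FTop => ltop n
  | FVar p => V u p
  | FImp a b => limp (eval E V a u) (eval E V b u)
  | FNeg a => lneg (eval E V a u)
  | FBox C a => E u C (eval E V a)
  end.

Definition valid_in_frame (N : finType) (n : nat) (S : Type)
  (E : S -> effFun N n S) (phi : form N) : Prop :=
  forall (V : S -> nat -> Luk n) (u : S), eval E V phi u = ltop n.

From mathcomp Require Import all_boot all_order.
From mathcomp Require Import zify.
From Stdlib Require Import Classical ClassicalEpsilon.
From Stdlib Require Wf_nat.

Set Implicit Arguments. Unset Strict Implicit. Unset Printing Implicit Defensive.

(* Take the natural numbers as states and, at state [u], let a coalition
   [C <> N] force [f] to the degree [inf_{s>u} f s] and the grand coalition to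
   [sup_{s>u} f s].  This frame is truly playable: the principal witness at [u]
   is the indicator of [(u, oo)].  Replacing these by [liminf f] and [limsup f]
   at every state gives a frame that is still playable, since each axiom
   involves finitely many values, all attained by the first frame at late
   states; but it is not principal, because the cofinite filter is not.
   For a fixed valuation the two frames give every formula the same value at
   all late states, and in the second frame the value at a state depends only
   on the valuation there and on its tail, so any state can be moved out far:
   hence every formula valid in the first frame is valid in the second. *)

Definition eventually (P : nat -> Prop) := exists K, forall u, (K <= u)%N -> P u.

Lemma eventually_and (P Q : nat -> Prop) :
  eventually P -> eventually Q -> eventually (fun u => P u /\ Q u).
Proof.
move=> [K1 h1] [K2 h2]; exists (maxn K1 K2) => u.
by rewrite geq_max => /andP[u1 u2]; split; [apply: h1 | apply: h2].
Qed.

Lemma eventually_mono (P Q : nat -> Prop) :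
  (forall u, P u -> Q u) -> eventually P -> eventually Q.
Proof. by move=> PQ [K hK]; exists K => u Ku; apply/PQ/hK. Qed.

Lemma eventually_after (P : nat -> Prop) :
  eventually P -> eventually (fun u => forall s, (u < s)%N -> P s).
Proof. by move=> [K hK]; exists K => u Ku s us; apply/hK/ltnW/(leq_ltn_trans Ku). Qed.

Lemma eventually_ex (P : nat -> Prop) : eventually P -> exists u, P u.
Proof. by move=> [K hK]; exists K; apply: hK. Qed.

Section Tail.
Variable n : nat.
Local Notation L := (Luk n).

Definition lleb : rel L := fun x y => (x <= y)%N.
Definition lgeb : rel L := fun x y => (y <= x)%N.

Lemma lleb_refl : reflexive lleb. Proof. by move=> x; apply: leqnn. Qed.
Lemma lgeb_refl : reflexive lgeb. Proof. by move=> x; apply: leqnn. Qed.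

Lemma lleb_trans : transitive lleb. Proof. by move=> y x z; apply: leq_trans. Qed.
Lemma lgeb_trans : transitive lgeb. Proof. by move=> y x z xy yz; apply: leq_trans yz xy. Qed.

Lemma lleb_anti : antisymmetric lleb.
Proof. by move=> x y le_xy; apply/ord_inj/anti_leq. Qed.

Lemma lgeb_anti : antisymmetric lgeb.
Proof. by move=> x y; rewrite andbC; apply: lleb_anti. Qed.

Lemma val_lneg (x : L) : nat_of_ord (lneg x) = n - x.
Proof. by rewrite /lneg inordK // ltnS leq_subr. Qed.

Lemma val_lmin (x y : L) : nat_of_ord (lmin x y) = minn x y.
Proof. by rewrite /lmin inordK // ltnS geq_min leq_ord. Qed.

Lemma val_loplus (x y : L) : nat_of_ord (loplus x y) = minn (x + y) n.
Proof. by rewrite /loplus inordK // ltnS geq_min leqnn orbT. Qed.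

Lemma val_lodot (x y : L) : nat_of_ord (lodot x y) = x + y - n.
Proof. rewrite /lodot inordK //; have := leq_ord x; have := leq_ord y; lia. Qed.

Lemma lle_lmin2 (a b c d : L) : lle a c -> lle b d -> lle (lmin a b) (lmin c d).
Proof. by rewrite /lle !val_lmin; lia. Qed.

Lemma lnegK : involutive (@lneg n).
Proof. by move=> x; apply: ord_inj; rewrite !val_lneg subKn ?leq_ord. Qed.

Lemma lpow_idem k (x : L) : lodot x x = x -> lpow k.+1 x = x.
Proof. by move=> xx; elim: k => [//|k IHk]; rewrite -[lpow _ _]/(lodot x (lpow k.+1 x)) IHk. Qed.

Lemma lodot_top : lodot (ltop n) (ltop n) = ltop n.
Proof. by apply: ord_inj; rewrite val_lodot /= addnK. Qed.

Lemma lodot_bot : lodot (lbot n) (lbot n) = lbot n.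
Proof. by apply: ord_inj; rewrite val_lodot /= sub0n. Qed.

Definition tail_least (R : rel L) (u : nat) (f : nat -> L) (v : L) :=
  (forall s, (u < s)%N -> R v (f s)) /\ exists2 s, (u < s)%N & f s = v.

Section TailLeast.
Variable R : rel L.

Lemma tail_least_ext u (f g : nat -> L) v :
  (forall s, (u < s)%N -> f s = g s) -> tail_least R u f v -> tail_least R u g v.
Proof.
move=> fg [lb [s us fsv]]; subst v; split; last by exists s; rewrite // fg.
by move=> t ut; rewrite -fg //; apply: lb.
Qed.

Lemma tail_least_map (R' : rel L) (phi : L -> L) u f v :
  {homo phi : x y / R x y >-> R' x y} ->
  tail_least R u f v -> tail_least R' u (fun s => phi (f s)) (phi v).
Proof.
move=> hphi [lb [s us fsv]]; subst v; split; last by exists s.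
by move=> t ut; apply: hphi; apply: lb.
Qed.

Lemma tail_least_const u c : reflexive R -> tail_least R u (fun _ => c) c.
Proof. by move=> Rr; split=> [s _|]; [apply: Rr | exists u.+1]. Qed.

Lemma tail_least_le i j f a b : (i <= j)%N ->
  tail_least R i f a -> tail_least R j f b -> R a b.
Proof. by move=> ij [lb _] [_ [s js <-]]; apply: lb; apply: leq_ltn_trans js. Qed.

Lemma tail_least_mono u (f g : nat -> L) a b : transitive R ->
  (forall s, R (g s) (f s)) -> tail_least R u g a -> tail_least R u f b -> R a b.
Proof. by move=> Rt gf [lb _] [_ [s us <-]]; apply: Rt (gf s); apply: lb. Qed.

Lemma tail_least_uniq u f v w : antisymmetric R ->
  tail_least R u f v -> tail_least R u f w -> v = w.
Proof.
move=> Ra hv hw; apply: Ra.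
by rewrite (tail_least_le (leqnn u) hv hw) (tail_least_le (leqnn u) hw hv).
Qed.

Lemma tail_least_eventually (a : nat -> L) (R' : rel L) l :
  antisymmetric R -> (forall x y, R' x y = R y x) ->
  {homo a : i j / (i <= j)%N >-> R i j} ->
  tail_least R' 0 a l -> eventually (fun u => a u = l).
Proof.
move=> Ra R'E amono [ub [s s_gt0 asl]]; subst l; exists s => u su.
by apply: Ra; rewrite (amono _ _ su) andbT -R'E ub // (leq_trans s_gt0 su).
Qed.

End TailLeast.

Lemma exists_tail_min u (f : nat -> L) : exists v, tail_least lleb u f v.
Proof.
pose P k := exists2 s, (u < s)%N & nat_of_ord (f s) = k.
have [k [[[s us fs] least] _]] :=
  Wf_nat.dec_inh_nat_subset_has_unique_least_element P (fun k => classic (P k))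
    (ex_intro _ _ (ex_intro2 _ _ u.+1 (ltnSn u) erefl)).
exists (f s); split; last by exists s.
by move=> t ut; rewrite /lleb fs; apply/leP/least; exists t.
Qed.

Definition tinf u (f : nat -> L) : L := epsilon (inhabits (lbot n)) (tail_least lleb u f).

Definition tsup u (f : nat -> L) : L := lneg (tinf u (fun s => lneg (f s))).

Lemma tinfP u f : tail_least lleb u f (tinf u f).
Proof. exact: epsilon_spec (exists_tail_min u f). Qed.

Lemma tsupP u f : tail_least lgeb u f (tsup u f).
Proof.
apply: tail_least_ext (fun s _ => lnegK (f s)) _.
apply: tail_least_map (tinfP _ _) => x y; rewrite /lleb /lgeb !val_lneg.
by move=> le_xy; apply: leq_sub2l.
Qed.

Definition liminf (f : nat -> L) : L := tsup 0 (fun u => tinf u f).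
Definition limsup (f : nat -> L) : L := tinf 0 (fun u => tsup u f).

Lemma tinf_eventually f : eventually (fun u => tinf u f = liminf f).
Proof.
apply: (tail_least_eventually (R := lleb) lleb_anti _ _ (tsupP _ _)) => // i j ij.
exact: tail_least_le ij (tinfP i f) (tinfP j f).
Qed.

Lemma tsup_eventually f : eventually (fun u => tsup u f = limsup f).
Proof.
apply: (tail_least_eventually (R := lgeb) lgeb_anti _ _ (tinfP _ _)) => // i j ij.
exact: tail_least_le ij (tsupP i f) (tsupP j f).
Qed.

End Tail.

Section Limit.
Variables (N : finType) (n : nat) (S : Type).

Lemma playable_eventual_limit (Eu : nat -> effFun N n S) (E : effFun N n S) :
  (forall u, playable (Eu u)) ->
  (forall C f, eventually (fun u => Eu u C f = E C f)) -> playable E.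
Proof.
move=> Eu_play Eu_lim.
have at_once C1 f1 C2 f2 C3 f3 : exists u, [/\ playable (Eu u),
    Eu u C1 f1 = E C1 f1, Eu u C2 f2 = E C2 f2 & Eu u C3 f3 = E C3 f3].
  have [u [e1 [e2 e3]]] := eventually_ex (eventually_and (Eu_lim C1 f1)
    (eventually_and (Eu_lim C2 f2) (Eu_lim C3 f3))).
  by exists u; split.
split; [|split; [|split; [|split; [|split]]]].
- move=> C f g; have [u [[mono _] <- <- _]] := at_once C f C g C f.
  exact: mono.
- move=> f; have [u [[_ [Nmax _]] <- <- _]] :=
    at_once set0 (fun s => lneg (f s)) setT f setT f.
  exact: Nmax.
- move=> C1 C2 f g; have [u [[_ [_ [sadd _]]] <- <- <-]] :=
    at_once C1 f C2 g (C1 :|: C2) (fun s => lmin (f s) (g s)).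
  exact: sadd.
- move=> C f; have [u [[_ [_ [_ [hom _]]]] <- <- <-]] :=
    at_once C f C (fun s => loplus (f s) (f s)) C (fun s => lodot (f s) (f s)).
  exact: hom.
- move=> C; have [u [[_ [_ [_ [_ [live _]]]]] <- _ _]] :=
    at_once C (fun _ => ltop n) C (fun _ => ltop n) C (fun _ => ltop n).
  exact: live.
- move=> C; have [u [[_ [_ [_ [_ [_ safe]]]]] <- _ _]] :=
    at_once C (fun _ => lbot n) C (fun _ => lbot n) C (fun _ => lbot n).
  exact: safe.
Qed.

End Limit.

Section Frames.
Variables (N : finType) (n : nat).
Local Notation L := (Luk n).

Definition tailE (u : nat) : effFun N n nat :=
  fun C f => if C == setT then tsup u f else tinf u f.

Definition limE : effFun N n nat :=
  fun C f => if C == setT then limsup f else liminf f.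

Lemma tailE_eventually C f : eventually (fun u => tailE u C f = limE C f).
Proof.
by rewrite /tailE /limE; case: ifP => _; [apply: tsup_eventually | apply: tinf_eventually].
Qed.

Lemma tailE_ext u C (f g : nat -> L) :
  (forall s, (u < s)%N -> f s = g s) -> tailE u C f = tailE u C g.
Proof.
move=> fg; rewrite /tailE; case: ifP => _.
- exact: tail_least_uniq (@lgeb_anti n) (tail_least_ext fg (tsupP u f)) (tsupP u g).
- exact: tail_least_uniq (@lleb_anti n) (tail_least_ext fg (tinfP u f)) (tinfP u g).
Qed.

Lemma tailE_const u C (c : L) : tailE u C (fun _ => c) = c.
Proof.
rewrite /tailE; case: ifP => _.
- exact: tail_least_uniq (@lgeb_anti n) (tsupP u _) (tail_least_const u c (@lgeb_refl n)).
- exact: tail_least_uniq (@lleb_anti n) (tinfP u _) (tail_least_const u c (@lleb_refl n)).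
Qed.

Lemma limE_ext C (f g : nat -> L) :
  eventually (fun s => f s = g s) -> limE C f = limE C g.
Proof.
move=> fg_ev; have [u [[fg <-] <-]] := eventually_ex (eventually_and (eventually_and
  (eventually_after fg_ev) (tailE_eventually C f)) (tailE_eventually C g)).
exact: tailE_ext.
Qed.

Lemma limE_const C (c : L) : limE C (fun _ => c) = c.
Proof. by have [u <-] := eventually_ex (tailE_eventually C (fun _ => c)); apply: tailE_const. Qed.

Lemma tailE_map u C f (phi : L -> L) : {homo phi : x y / lleb x y} ->
  tailE u C (fun s => phi (f s)) = phi (tailE u C f).
Proof.
move=> phi_mono; rewrite /tailE; case: ifP => _.
- apply: tail_least_uniq (@lgeb_anti n) (tsupP u _) (tail_least_map _ (tsupP u f)).
  by move=> x y; apply: phi_mono.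
- exact: tail_least_uniq (@lleb_anti n) (tinfP u _) (tail_least_map phi_mono (tinfP u f)).
Qed.

Lemma tailE_mono u C (f g : nat -> L) :
  (forall s, lle (g s) (f s)) -> lle (tailE u C g) (tailE u C f).
Proof.
move=> gf; rewrite /tailE; case: ifP => _.
- exact: tail_least_mono (@lgeb_trans n) gf (tsupP u f) (tsupP u g).
- exact: tail_least_mono (@lleb_trans n) gf (tinfP u g) (tinfP u f).
Qed.

Lemma tailE_le_some u C f : exists2 s, (u < s)%N & lle (tailE u C f) (f s).
Proof.
rewrite /tailE; case: ifP => _.
- by have [_ [s us <-]] := tsupP u f; exists s => //; apply: leqnn.
- by exists u.+1 => //; apply: (tinfP u f).1.
Qed.

Lemma tailE_le_all u C f : C != setT -> forall s, (u < s)%N -> lle (tailE u C f) (f s).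
Proof. by rewrite /tailE => /negbTE ->; apply: (tinfP u f).1. Qed.

Section Nondegenerate.
Hypothesis set0_neqT : set0 != setT :> {set N}.

Lemma tailE_superadditive u : superadditive (tailE u).
Proof.
move=> C1 C2 f g disj.
have [UT|UnT] := eqVneq (C1 :|: C2) setT; rewrite /tailE.
- have C12nT : (C1 != setT) || (C2 != setT).
    rewrite -negb_and; apply: contra set0_neqT => /andP[/eqP C1T /eqP C2T].
    by rewrite -disj C1T C2T setIid.
  have [s us le_s] : exists2 s, (u < s)%N &
      lle (lmin (tailE u C1 f) (tailE u C2 g)) (lmin (f s) (g s)).
    case/orP: C12nT => CnT.
    + have [s us le_s] := tailE_le_some u C2 g.
      by exists s => //; apply: lle_lmin2 le_s; apply: tailE_le_all.
    + have [s us le_s] := tailE_le_some u C1 f.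
      by exists s => //; apply: lle_lmin2; last apply: tailE_le_all.
  rewrite UT eqxx; apply: leq_trans le_s _.
  exact: (tsupP u (fun s => lmin (f s) (g s))).1.
- have C1nT : C1 != setT by apply: contraNneq UnT => ->; rewrite setTU.
  have C2nT : C2 != setT by apply: contraNneq UnT => ->; rewrite setUT.
  rewrite (negbTE UnT); have [_ [s us <-]] := tinfP u (fun s => lmin (f s) (g s)).
  by apply: lle_lmin2; apply: tailE_le_all.
Qed.

Lemma tailE_playable u : playable (tailE u).
Proof.
split; [|split; [|split; [|split; [|split]]]].
- by move=> C f g; apply: tailE_mono.
- by move=> f; rewrite /tailE eqxx (negbTE set0_neqT); apply: leqnn.
- exact: tailE_superadditive.
- move=> C f; split.
  + apply: (@tailE_map u C f (fun x => loplus x x)) => x y.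
    by rewrite /lleb !val_loplus; lia.
  + apply: (@tailE_map u C f (fun x => lodot x x)) => x y.
    by rewrite /lleb !val_lodot; lia.
- by move=> C; apply: tailE_const.
- by move=> C; apply: tailE_const.
Qed.

Lemma limE_playable : playable limE.
Proof. exact: playable_eventual_limit tailE_playable tailE_eventually. Qed.

Hypothesis n_gt0 : (0 < n)%N.

Lemma tailE_principal u : principal (tailE u).
Proof.
have lpow_n : forall x, lodot x x = x -> lpow n x = x.
  by case: n n_gt0 => // k _ x; apply: lpow_idem.
exists (fun s => if (u < s)%N then ltop n else lbot n) => f.
rewrite /tailE (negbTE set0_neqT); split => [inf_top s | top_le].
- case: ifP => us; rewrite lpow_n ?lodot_top ?lodot_bot //.
  by rewrite -inf_top; apply: (tinfP u f).1.
- have [_ [s us <-]] := tinfP u f; apply/ord_inj/anti_leq.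
  by rewrite leq_ord; have := top_le s; rewrite us lpow_n ?lodot_top.
Qed.

Lemma limE_not_principal : ~ principal limE.
Proof.
move=> [g g_principal].
have g_bot s0 : lle (lpow n (g s0)) (lbot n).
  pose f0 s := if s == s0 then lbot n else ltop n.
  have f0_top : limE set0 f0 = ltop n.
    rewrite -(limE_const set0 (ltop n)); apply: limE_ext.
    by exists s0.+1 => s s0s; rewrite /f0 ifF //; apply/eqP => ss0; rewrite ss0 ltnn in s0s.
  by have := (g_principal f0).1 f0_top s0; rewrite /f0 eqxx.
have := (g_principal (fun _ => lbot n)).2 g_bot.
by rewrite limE_const => /(congr1 val) /= n0; move: n_gt0; rewrite -n0.
Qed.

End Nondegenerate.
End Frames.

Section Transfer.
Variables (N : finType) (n : nat).
Local Notation L := (Luk n).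
Local Notation tailF := (@tailE N n).
Local Notation limF := (fun _ : nat => @limE N n).

Lemma eval_limF_tail (V W : nat -> nat -> L) (phi : form N) :
  eventually (fun s => V s = W s) ->
  forall s s', V s = W s' -> eval limF V phi s = eval limF W phi s'.
Proof.
move=> VW; elim: phi => [|p|a IHa b IHb|a IHa|C a IHa] s s' Vss //=.
- by rewrite Vss.
- by rewrite (IHa s s') ?(IHb s s').
- by rewrite (IHa s s').
- by apply: limE_ext; apply: eventually_mono VW => t; apply: IHa.
Qed.

Lemma eval_tailF_limF (V : nat -> nat -> L) (phi : form N) :
  eventually (fun u => forall W, (forall s, (u < s)%N -> W s = V s) ->
    eval tailF W phi u = eval limF W phi u).
Proof.
elim: phi => [|p|a IHa b IHb|a IHa|C a IHa]; try by exists 0.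
- apply: eventually_mono (eventually_and IHa IHb) => u [ha hb] W WV /=.
  by rewrite ha ?hb.
- by apply: eventually_mono IHa => u ha W WV /=; rewrite ha.
- have := eventually_and (eventually_after IHa) (tailE_eventually C (eval limF V a)).
  apply: eventually_mono => u [ha lim_u] W WV /=.
  have WV_ev : eventually (fun s => W s = V s) by exists u.+1; apply: WV.
  have WV_a s : (u < s)%N -> eval limF W a s = eval limF V a s.
    by move=> us; apply: eval_limF_tail WV_ev _ _ (WV s us).
  rewrite (@limE_ext _ _ C (eval limF W a) (eval limF V a)); last by exists u.+1.
  rewrite -lim_u; apply: tailE_ext => s us.
  by rewrite -WV_a // (ha s us) // => t st; apply/WV/(ltn_trans us st).
Qed.

Lemma valid_tailF_limF (phi : form N) :
  valid_in_frame tailF phi -> valid_in_frame limF phi.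
Proof.
move=> valid V u0; have [K hK] := eval_tailF_limF V phi.
pose W s := if s == K then V u0 else V s.
have WV s : (K < s)%N -> W s = V s by move=> Ks; rewrite /W gtn_eqF.
rewrite (@eval_limF_tail V W phi _ u0 K); last by rewrite /W eqxx.
  by rewrite -(hK K (leqnn K) W WV) valid.
by exists K.+1 => s Ks; rewrite WV.
Qed.

End Transfer.

Theorem mainTheorem10 (N : finType) (n : nat) :
  (1 < #|N|)%N -> (0 < n)%N ->
  ~ exists Lambda : form N -> Prop,
      forall (S : Type) (E : S -> effFun N n S),
        inhabited S -> playable_frame E ->
        (truly_playable_frame E <->
         forall phi, Lambda phi -> valid_in_frame E phi).
Proof.
move=> N_gt1 n_gt0 [Lambda Lambda_axiomatizes].
have set0_neqT : set0 != setT :> {set N}.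
  by rewrite eq_sym -card_gt0 cardsT (ltnW N_gt1).
have tail_playable : playable_frame (@tailE N n) := tailE_playable n set0_neqT.
have lim_playable : playable_frame (fun _ : nat => @limE N n).
  by move=> _; apply: limE_playable set0_neqT.
have tail_truly : truly_playable_frame (@tailE N n).
  by move=> u; split; [apply: tail_playable | exact: (tailE_principal set0_neqT n_gt0 u)].
have tail_valid := (Lambda_axiomatizes _ _ (inhabits 0) tail_playable).1 tail_truly.
have lim_truly := (Lambda_axiomatizes _ _ (inhabits 0) lim_playable).2
  (fun phi Lphi => valid_tailF_limF (tail_valid phi Lphi)).
exact: limE_not_principal n_gt0 (lim_truly 0).2.
Qed.
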